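(* Let $n,m,\bar m$ be positive integers with $n\le m$ and $n\le \bar m$. Let $\mathcal F$ and $\bar{\mathcal F}$ be the fields of rational functions in $x_1,\dots,x_m$ and in $\bar x_1,\dots,\bar x_{\bar m}$, respectively. Let $\varphi:\mathbb{Q}_{\mathrm{sf}}(x_1,\dots,x_m)\to \mathrm{Trop}(\bar x_{n+1},\dots,\bar x_{\bar m})$ be a semifield homomorphism (determined by an arbitrary choice of Laurent monomials $\varphi(x_i)$), and let $\psi:\mathbb{Q}_{\mathrm{sf}}(x_1,\dots,x_m)\to\mathbb{Q}_{\mathrm{sf}}(\bar x_1,\dots,\bar x_{\bar m})$ be the semifield homomorphism with $\psi(x_i)=\bar x_i\,\varphi(x_i)$ for $i\le n$ and $\psi(x_i)=\varphi(x_i)$ for $i>n$. Let $(\mathbf{x}(t),\mathbf{y}(t),B(t))_{t\in\mathbb{T}_n}$ be a seed pattern in $\mathcal F$ with frozen variables $x_{n+1},\dots,x_m$, with $\mathbf{x}(t)=(x_{1;t},\dots,x_{n;t})$, $\mathbf{y}(t)=(y_{1;t},\dots,y_{n;t})\in\mathrm{Trop}(x_{n+1},\dots,x_m)^n$, $B(t)=(b^t_{ij})$, and initial cluster $\mathbf{x}(t_\circ)=(x_1,\dots,x_n)$. Define $$\bar x_{i;t}=\frac{\psi(x_{i;t})}{\varphi(x_{i;t})},\qquad \bar y_{k;t}=\varphi(\hat y_{k;t})=\varphi(y_{k;t})\prod_{i=1}^n\varphi(x_{i;t})^{b^t_{ik}},$$ and $\bar{\mathbf x}(t)=(\bar x_{1;t},\dots,\bar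 x_{n;t})$, $\bar{\mathbf y}(t)=(\bar y_{1;t},\dots,\bar y_{n;t})$. Then $(\bar{\mathbf x}(t),\bar{\mathbf y}(t),B(t))_{t\in\mathbb{T}_n}$ is a seed pattern in $\bar{\mathcal F}$, with the same exchange matrices $B(t)$ and with frozen variables $\bar x_{n+1},\dots,\bar x_{\bar m}$.
   Context: $\mathbb{Q}_{\mathrm{sf}}(u_1,\dots,u_l)$ denotes the semifield of subtraction-free rational expressions in $u_1,\dots,u_l$ (with ordinary multiplication and addition). $\mathrm{Trop}(u_1,\dots,u_l)$ is the tropical semifield: the multiplicative group of Laurent monomials in $u_1,\dots,u_l$ with addition $\prod u_j^{a_j}\oplus\prod u_j^{b_j}=\prod u_j^{\min(a_j,b_j)}$. A semifield homomorphism preserves multiplication and sends $+$ to the addition of the target. $\mathbb{T}_n$ is the $n$-regular tree whose edges are labeled by $1,\dots,n$ so that the $n$ edges at each vertex have distinct labels. A seed pattern in a field $\mathcal F$ (of rational functions in $m$ variables) with frozen variables $x_{n+1},\dots,x_m$ is an assignment to each $t\in\mathbb{T}_n$ of a triple $(\mathbf{x}(t),\mathbf{y}(t),B(t))$, where $\mathbf{x}(t)=(x_{1;t},\dots,x_{n;t})\in\mathcal F^n$ is such that $x_{1;t},\dots,x_{n;t},x_{n+1},\dots,x_m$ are algebraically independent and generate $\mathcal F$, $\mathbf{y}(t)\in\mathrm{Trop}(x_{n+1},\dots,x_m)^n$, and $B(t)=(b^t_{ij})$ is a skew-symmetrizable integer $n\times n$ matrix, such that for every edge $t\overset{k}{-}t'$: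 $B(t')=\mu_k(B(t))$ (matrix mutation: $b'_{ij}=-b_{ij}$ if $k\in\{i,j\}$, else $b'_{ij}=b_{ij}+\mathrm{sgn}(b_{ik})\max(b_{ik}b_{kj},0)$); $y_{k;t'}=y_{k;t}^{-1}$ and $y_{j;t'}=y_{j;t}\,y_{k;t}^{\max(b^t_{kj},0)}(y_{k;t}\oplus1)^{-b^t_{kj}}$ for $j\ne k$; $x_{i;t'}=x_{i;t}$ for $i\ne k$; and $$x_{k;t}\,x_{k;t'}=\frac{y_{k;t}\prod_{b^t_{ik}>0}x_{i;t}^{b^t_{ik}}+\prod_{b^t_{ik}<0}x_{i;t}^{-b^t_{ik}}}{y_{k;t}\oplus1}$$ (products over $i\in\{1,\dots,n\}$). By these relations every $x_{i;t}$ is a subtraction-free rational expression in $x_1,\dots,x_m$, so $\psi(x_{i;t})$ and $\varphi(x_{i;t})$ are defined. Here $\hat y_{k;t}=y_{k;t}\prod_{i=1}^n x_{i;t}^{b^t_{ik}}$. *)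

From HB Require Import structures.
From mathcomp Require Import all_boot all_order all_algebra.
From mathcomp Require Import mpoly fraction.
Set Implicit Arguments. Unset Strict Implicit. Unset Printing Implicit Defensive.
Import Order.TTheory GRing.Theory Num.Theory.
Local Open Scope ring_scope.

Notation tofrac R := (@FracField.tofrac R).

(* (variable x_{i+1} is indexed by i : 'I_m, i.e. 0-based).            *)
Definition ratfun (m : nat) := {fraction {mpoly rat[m]}}.

Definition X (m : nat) (i : 'I_m) : ratfun m := tofrac _ ('X_i : {mpoly rat[m]}).

(* variable with a natural-number (0-based) index; 1 if out of range *)
Definition Xn (m : nat) (i : nat) : ratfun m :=
  match @insub nat (fun k => k < m)%N _ i with Some j => X j | None => 1 end.

Definition ratC (m : nat) (c : rat) : ratfun m := tofrac _ (c%:MP : {mpoly rat[m]}).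

Definition peval (m : nat) (v : 'I_m -> ratfun m) (p : {mpoly rat[m]}) : ratfun m :=
  mmap (@ratC m) v p.

Definition alg_indep (m : nat) (v : 'I_m -> ratfun m) : Prop :=
  forall p : {mpoly rat[m]}, peval v p = 0 -> p = 0.

Definition generates (m : nat) (v : 'I_m -> ratfun m) : Prop :=
  forall f : ratfun m, exists p q : {mpoly rat[m]},
    peval v q != 0 /\ f = peval v p / peval v q.

(* Subtraction-free rational expressions Q_sf(x_1,...,x_m), as the     *)
(* sub-semifield of F m generated by the variables under +, *, ^-1.    *)
Inductive sf (m : nat) : ratfun m -> Prop :=
| sf_var (i : 'I_m) : sf (X i)
| sf_add f g : sf f -> sf g -> sf (f + g)
| sf_mul f g : sf f -> sf g -> sf (f * g)
| sf_inv f : sf f -> sf f^-1.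

(* Tropical semifield Trop(u_1,...,u_k): Laurent monomials represented *)
(* by their integer exponent vectors.                                  *)
Definition trop (k : nat) := {ffun 'I_k -> int}.
Definition tmul k (a b : trop k) : trop k := [ffun j => a j + b j].
Definition tadd k (a b : trop k) : trop k := [ffun j => Order.min (a j) (b j)].
Definition tone k : trop k := [ffun _ => 0].
Definition tpow k (a : trop k) (z : int) : trop k := [ffun j => a j * z].

(* Trop(x_{n+1},...,x_m) = trop (m - n); the monomial as an element of F m *)
Definition mono (m n : nat) (e : trop (m - n)) : ratfun m :=
  \prod_(j < m - n) Xn m (n + j) ^ (e j).

Definition sf_hom_trop (m k : nat) (phi : ratfun m -> trop k) : Prop :=
  forall f g, sf f -> sf g ->
    phi (f + g) = tadd (phi f) (phi g) /\ phi (f * g) = tmul (phi f) (phi g).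

Definition sf_hom (m mb : nat) (psi : ratfun m -> ratfun mb) : Prop :=
  (forall f, sf f -> sf (psi f)) /\
  forall f g, sf f -> sf g ->
    psi (f + g) = psi f + psi g /\ psi (f * g) = psi f * psi g.

(* The n-regular tree T_n: vertices are reduced words in the labels    *)
(* 'I_n (no two consecutive equal letters); t -k- t' iff one is the    *)
(* other with the letter k appended.                                   *)
Definition reduced n (s : seq 'I_n) : bool := sorted (fun a b => a != b) s.
Definition vert (n : nat) := {s : seq 'I_n | reduced s}.
Definition troot (n : nat) : vert n := exist _ [::] isT.
Definition edge n (t : vert n) (k : 'I_n) (t' : vert n) : Prop :=
  sval t' = rcons (sval t) k \/ sval t = rcons (sval t') k.

Definition skew_symmetrizable n (B : 'M[int]_n) : Prop :=
  exists d : 'I_n -> int, (forall i, 0 < d i) /\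
    forall i j, d i * B i j = - (d j * B j i).

Definition mat_mut n (k : 'I_n) (B : 'M[int]_n) : 'M[int]_n :=
  \matrix_(i, j) (if (i == k) || (j == k) then - B i j
                  else B i j + sgz (B i k) * Order.max (B i k * B k j) 0).

Definition y_mut n r (k : 'I_n) (B : 'M[int]_n) (y : 'I_n -> trop r) (j : 'I_n)
  : trop r :=
  if j == k then tpow (y k) (-1)
  else tmul (y j) (tmul (tpow (y k) (Order.max (B k j) 0))
                        (tpow (tadd (y k) (tone r)) (- B k j))).

Definition ext_cluster (m n : nat) (x : 'I_n -> ratfun m) : 'I_m -> ratfun m :=
  fun i => match @insub nat (fun k => k < n)%N _ (val i) with
           | Some j => x j | None => X i end.

Definition seed_pattern (n m : nat) (x : vert n -> 'I_n -> ratfun m)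
  (y : vert n -> 'I_n -> trop (m - n)) (B : vert n -> 'M[int]_n) : Prop :=
  (forall t, alg_indep (ext_cluster (x t)) /\ generates (ext_cluster (x t))) /\
  (forall t, skew_symmetrizable (B t)) /\
  (forall t t' k, edge t k t' ->
     [/\ B t' = mat_mut k (B t),
         y t' = y_mut k (B t) (y t),
         (forall i, i != k -> x t' i = x t i) &
         x t k * x t' k =
           (mono (y t k) * \prod_(i < n | 0 < B t i k) x t i ^ B t i k
            + \prod_(i < n | B t i k < 0) x t i ^ (- B t i k))
           / mono (tadd (y t k) (tone (m - n)))]).

Definition yhat n m (x : 'I_n -> ratfun m) (y : 'I_n -> trop (m - n))
  (B : 'M[int]_n) (k : 'I_n) : ratfun m :=
  mono (y k) * \prod_(i < n) x i ^ B i k.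

From HB Require Import structures.
From mathcomp Require Import all_boot all_order all_algebra.
From mathcomp Require Import mpoly fraction.
From mathcomp Require Import ring zify.
From Stdlib Require Import FunctionalExtensionality.
Set Implicit Arguments. Unset Strict Implicit. Unset Printing Implicit Defensive.
Import Order.TTheory GRing.Theory Num.Theory.
Local Open Scope ring_scope.

(* The map [bar f := psi f / phi f], with the Laurent monomial [phi f] read in
   [ratfun mb], is multiplicative on subtraction-free expressions and is [1] on
   frozen monomials.  Applying [psi] to an exchange relation and dividing by
   [phi] of both sides, the homogeneity of tropical addition yields the
   exchange relation of the new pattern, with coefficient [phi (yhat)].
   Applying [phi] alone to the exchange relation gives, coordinatewise, the
   integer identity behind the y-mutation rule for [phi (yhat)].  Finally the
   new extended clusters freely generate [ratfun mb]: at the root they are the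
   variables themselves, and a mutation replaces [bar x_k] by [R / bar x_k]
   with [R] in the subfield generated by the other variables, over which
   [bar x_k] is transcendental. *)

(** * Polynomial evaluation *)

Lemma fraction_numden (R : idomainType) (f : {fraction R}) :
  exists p q : R, q != 0 /\ f = tofrac p / tofrac q.
Proof.
elim/quotW: f => r; exists (\n_r), (\d_r); split; first exact: denom_ratioP.
rewrite !piE; apply/eqmodP; rewrite /= FracField.equivfE /FracField.mulf /FracField.invf.
have d0 := denom_ratioP r.
rewrite !numden_Ratio ?oner_eq0 ?mulf_neq0 // ?mul1r ?mulr1 //; first by rewrite mulrC.
all: exact: oner_neq0.
Qed.

Lemma mmap_unique N (R S : comNzRingType) (f : {rmorphism R -> S}) (h : 'I_N -> S)
    (g : {mpoly R[N]} -> S) :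
  {morph g : p q / p + q} -> {morph g : p q / p * q} ->
  (forall c, g c%:MP = f c) -> (forall i, g 'X_i = h i) -> g =1 mmap f h.
Proof.
move=> gD gM gC gX; have g1 : g 1 = 1 by rewrite -mpolyC1 gC rmorph1.
have gXn x j : g (x ^+ j) = g x ^+ j.
  by elim: j => [|j IH]; rewrite ?expr0 // !exprS gM IH.
elim/mpolyind=> [|c m p _ _ IH]; first by rewrite -mpolyC0 gC mmap0 rmorph0.
rewrite gD mmapD IH mmapZ mmapX -mul_mpolyC gM gC; congr (_ * _ + _).
rewrite mpolyXE_id /mmap1 (big_morph g gM g1); apply: eq_bigr => i _.
by rewrite gXn gX.
Qed.

Section PolyEval.
Variable N : nat.
Local Notation F := (ratfun N).
Local Notation MP := {mpoly rat[N]}.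
Implicit Types (v w : 'I_N -> F) (p q : MP).

Definition ratRM : {rmorphism rat -> F} := (@FracField.tofrac _ \o @mpolyC N rat)%FUN.

Lemma pevalE v : peval v =1 mmap ratRM v. Proof. by []. Qed.

Definition pevalRM v : {rmorphism MP -> F} := mmap ratRM v.

Lemma peval0 v : peval v 0 = 0. Proof. by rewrite pevalE rmorph0. Qed.
Lemma peval1 v : peval v 1 = 1. Proof. by rewrite pevalE rmorph1. Qed.
Lemma pevalD v p q : peval v (p + q) = peval v p + peval v q.
Proof. by rewrite !pevalE rmorphD. Qed.
Lemma pevalM v p q : peval v (p * q) = peval v p * peval v q.
Proof. by rewrite !pevalE rmorphM. Qed.

Lemma coef_map_peval v (A : {poly MP}) j : (map_poly (peval v) A)`_j = peval v A`_j.
Proof. exact: coef_map_id0 (peval0 v). Qed.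

Lemma horner_map_peval v (A : {poly MP}) p :
  (map_poly (peval v) A).[peval v p] = peval v A.[p].
Proof. exact: (horner_map (pevalRM v)). Qed.

Lemma pevalC v c : peval v c%:MP = ratRM c. Proof. by rewrite pevalE mmapC. Qed.

Lemma pevalX v i : peval v 'X_i = v i. Proof. by rewrite pevalE mmapX mmap1U. Qed.

Lemma eq_peval v w : v =1 w -> peval v =1 peval w.
Proof. by move=> e p; apply: eq_bigr => m _; rewrite (mmap1_eq _ e). Qed.

Lemma peval_X p : peval (@X N) p = tofrac p.
Proof. by rewrite pevalE -(mmap_unique (g := @tofrac _)) //; [exact: rmorphD | exact: rmorphM]. Qed.

Lemma alg_indep_X : alg_indep (@X N).
Proof. by move=> p; rewrite peval_X => /eqP; rewrite tofrac_eq0 => /eqP. Qed.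

Lemma generates_X : generates (@X N).
Proof.
move=> f; have [p [q [q0 ->]]] := fraction_numden f.
by exists p, q; rewrite !peval_X tofrac_eq0.
Qed.

Lemma alg_indep_neq0 v i : alg_indep v -> v i != 0.
Proof.
move=> hv; apply/eqP => vi0; have := hv 'X_i; rewrite pevalX vi0 => /(_ erefl).
by move=> /(congr1 (mcoeff U_(i))) /eqP; rewrite mcoeffX mcoeff0 eqxx oner_eq0.
Qed.

End PolyEval.

Lemma alg_indep_generates_eq N (v w : 'I_N -> ratfun N) : v =1 w ->
  alg_indep v /\ generates v -> alg_indep w /\ generates w.
Proof.
move=> vw [iv gv]; split=> [p|f]; first by rewrite -(eq_peval vw); exact: iv.
by have [p [q [nq ef]]] := gv f; exists p, q; rewrite -!(eq_peval vw).
Qed.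

Lemma X_neq0 N (i : 'I_N) : X i != 0.
Proof. exact: alg_indep_neq0 (@alg_indep_X N). Qed.

(** * Subfields generated by evaluations *)

Section GeneratedSubfield.
Variable N : nat.
Local Notation F := (ratfun N).
Local Notation MP := {mpoly rat[N]}.
Implicit Types (v : 'I_N -> F) (f g : F).

Definition generated_by (P : {pred MP}) v f :=
  exists p q, [/\ p \in P, q \in P, peval v q != 0 & f = peval v p / peval v q].

Variable P : {pred MP}.
Hypothesis P_closed : semiring_closed P.

Let P0 : 0 \in P. Proof. by case: P_closed => [[]]. Qed.
Let P1 : 1 \in P. Proof. by case: P_closed => _ []. Qed.
Let PD : {in P &, forall p q, p + q \in P}. Proof. by case: P_closed => [[]]. Qed.
Let PM : {in P &, forall p q, p * q \in P}. Proof. by case: P_closed => _ []. Qed.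

Lemma generated_by_peval v p : p \in P -> generated_by P v (peval v p).
Proof. by move=> Pp; exists p, 1; rewrite peval1 divr1 oner_eq0 P1. Qed.

Lemma generated_by0 v : generated_by P v 0.
Proof. by rewrite -(peval0 v); apply/generated_by_peval/P0. Qed.

Lemma generated_by1 v : generated_by P v 1.
Proof. by rewrite -(peval1 v); apply/generated_by_peval/P1. Qed.

Lemma generated_byD v f g :
  generated_by P v f -> generated_by P v g -> generated_by P v (f + g).
Proof.
move=> [p1 [q1 [Pp1 Pq1 nq1 ->]]] [p2 [q2 [Pp2 Pq2 nq2 ->]]].
exists (p1 * q2 + p2 * q1), (q1 * q2); split.
- by apply: PD; apply: PM.
- exact: PM.
- by rewrite pevalM (mulf_neq0 nq1 nq2).
- by rewrite pevalD !pevalM (addf_div _ _ nq1 nq2).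
Qed.

Lemma generated_byM v f g :
  generated_by P v f -> generated_by P v g -> generated_by P v (f * g).
Proof.
move=> [p1 [q1 [Pp1 Pq1 nq1 ->]]] [p2 [q2 [Pp2 Pq2 nq2 ->]]].
exists (p1 * p2), (q1 * q2); split; try exact: PM.
- by rewrite pevalM (mulf_neq0 nq1 nq2).
- by rewrite !pevalM mulf_div.
Qed.

Lemma generated_byV v f : generated_by P v f -> generated_by P v f^-1.
Proof.
move=> [p [q [Pp Pq nq ->]]]; have [p0|np] := eqVneq (peval v p) 0.
  by rewrite p0 mul0r invr0; exact: generated_by0.
by exists q, p; split; rewrite // invfM invrK mulrC.
Qed.

Lemma generated_byXn v f j : generated_by P v f -> generated_by P v (f ^+ j).
Proof.
move=> gf; elim: j => [|j IH]; rewrite ?expr0 ?exprS; first exact: generated_by1.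
exact: generated_byM.
Qed.

Lemma generated_byXz v f (z : int) : generated_by P v f -> generated_by P v (f ^ z).
Proof.
by case: z => j gf; rewrite ?NegzE -?invr_expz; [|apply: generated_byV]; exact: generated_byXn.
Qed.

Lemma generated_by_prod v (I : Type) (r : seq I) (Q : pred I) (G : I -> F) :
  (forall i, Q i -> generated_by P v (G i)) -> generated_by P v (\prod_(i <- r | Q i) G i).
Proof. by move=> gG; apply: big_ind => //; [exact: generated_by1 | exact: generated_byM]. Qed.

Lemma generated_by_horner v (A : {poly F}) x :
  (forall j, generated_by P v A`_j) -> generated_by P v x -> generated_by P v A.[x].
Proof.
elim/poly_ind: A => [|A c IH] gA gx; first by rewrite horner0; exact: generated_by0.
rewrite hornerMXaddC; apply: generated_byD; first apply: generated_byM => //.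
  by apply: IH => // j; have := gA j.+1; rewrite coefD coefMX coefC addr0.
by have := gA 0%N; rewrite coefD coefMX coefC add0r.
Qed.

End GeneratedSubfield.

Lemma predT_semiring_closed N : semiring_closed (@predT {mpoly rat[N]}).
Proof. by split; split. Qed.

Lemma generatesP N (v : 'I_N -> ratfun N) :
  generates v <-> forall f, generated_by predT v f.
Proof.
split=> [gv f | gv f]; first by have [p [q [nq ->]]] := gv f; exists p, q.
by have [p [q [_ _ nq ->]]] := gv f; exists p, q.
Qed.

Lemma generated_by_sub N (P Q : {pred {mpoly rat[N]}}) v f :
  {subset P <= Q} -> generated_by P v f -> generated_by Q v f.
Proof. by move=> PQ [p [q [Pp Pq nq ->]]]; exists p, q; split; rewrite ?PQ. Qed.

(** * Exchanging one free generator *)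

Lemma polyC_hornerX (R : comNzRingType) (A : {poly R}) : (map_poly polyC A).['X] = A.
Proof.
rewrite horner_coef size_map_polyC; apply/esym; rewrite -[LHS]coefK poly_def.
by apply: eq_bigr => i _; rewrite coef_map mul_polyC.
Qed.

Section OneVariable.
Variables (N : nat) (k : 'I_N).
Local Notation F := (ratfun N).
Local Notation MP := {mpoly rat[N]}.
Implicit Types (v w : 'I_N -> F) (p q : MP).

(* [p] does not involve [X_k] iff it is fixed by the substitution [X_k := 0]. *)
Definition zeroX : {rmorphism MP -> MP} :=
  mmap (@mpolyC N rat) (fun i => if i == k then 0 else 'X_i).

Definition Xfree : {pred MP} := [pred p | zeroX p == p].

Lemma zeroXC c : zeroX c%:MP = c%:MP. Proof. exact: mmapC. Qed.

Lemma zeroX_X i : zeroX 'X_i = if i == k then 0 else 'X_i.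
Proof. by rewrite /= mmapX mmap1U. Qed.

Lemma Xfree_semiring_closed : semiring_closed Xfree.
Proof.
split; split; rewrite ?inE ?rmorph0 ?rmorph1 // => p q; rewrite !inE => /eqP zp /eqP zq.
  by rewrite rmorphD zp zq.
by rewrite rmorphM zp zq.
Qed.

Lemma XfreeX i : i != k -> 'X_i \in Xfree.
Proof. by rewrite inE zeroX_X => /negbTE ->. Qed.

Lemma peval_zeroX v p : peval v (zeroX p) = peval (fun i => if i == k then 0 else v i) p.
Proof.
rewrite [RHS]pevalE; apply: (mmap_unique (g := fun q => peval v (zeroX q))) => [a b|a b|c|i].
- by rewrite rmorphD pevalD.
- by rewrite rmorphM pevalM.
- by rewrite zeroXC pevalC.
- by rewrite zeroX_X; case: eqP; rewrite ?peval0 ?pevalX.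
Qed.

Lemma peval_Xfree v w p : (forall i, i != k -> w i = v i) -> p \in Xfree ->
  peval w p = peval v p.
Proof.
move=> wv /eqP <-; rewrite !peval_zeroX; apply: eq_peval => i.
by case: eqP => // /eqP /wv.
Qed.

(* [p] as a polynomial in [X_k] over the polynomials in the other variables. *)
Definition poly_in : {rmorphism MP -> {poly MP}} :=
  mmap (polyC \o @mpolyC N rat)%FUN (fun i => if i == k then 'X else ('X_i)%:P).

Lemma poly_inE p :
  poly_in p = mmap (polyC \o @mpolyC N rat)%FUN (fun i => if i == k then 'X else ('X_i)%:P) p.
Proof. by []. Qed.

Lemma poly_inC c : poly_in c%:MP = (c%:MP)%:P. Proof. exact: mmapC. Qed.

Lemma poly_inX i : poly_in 'X_i = if i == k then 'X else ('X_i)%:P.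
Proof. by rewrite /= mmapX mmap1U. Qed.

Lemma horner_poly_in p : (poly_in p).['X_k] = p.
Proof.
have idE q : q = mmap (@mpolyC N rat) (fun i => 'X_i) q.
  by apply: (mmap_unique (g := id)).
rewrite [RHS]idE; apply: (mmap_unique (g := fun q => (poly_in q).['X_k])) => [a b|a b|c|i].
- by rewrite rmorphD hornerD.
- by rewrite rmorphM hornerM.
- by rewrite poly_inC hornerC.
- by rewrite poly_inX; case: eqP => [->|]; rewrite ?hornerX ?hornerC.
Qed.

Lemma coef_poly_in_Xfree p j : (poly_in p)`_j \in Xfree.
Proof.
suff zE : map_poly zeroX (poly_in p) = poly_in p by rewrite inE -{2}zE coef_map.
rewrite [RHS]poly_inE.
apply: (mmap_unique (g := fun q => map_poly zeroX (poly_in q))) => [a b|a b|c|i].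
- by rewrite !rmorphD.
- by rewrite !rmorphM.
- by rewrite poly_inC map_polyC; apply: (congr1 polyC); exact: zeroXC.
- rewrite poly_inX; case: eqP => [_|/eqP ne]; first by rewrite map_polyX.
  have := zeroX_X i; rewrite (negbTE ne) => zXi.
  by rewrite map_polyC; apply: (congr1 polyC); exact: zXi.
Qed.

Lemma poly_in_Xfree p : p \in Xfree -> poly_in p = p%:P.
Proof.
move=> /eqP <-; pose h i := if i == k then 0 else ('X_i : MP)%:P.
transitivity (mmap (polyC \o @mpolyC N rat)%FUN h p).
  apply: (mmap_unique (g := fun q => poly_in (zeroX q))) => [a b|a b|c|i].
  - by rewrite !rmorphD.
  - by rewrite !rmorphM.
  - by rewrite zeroXC poly_inC.
  - by rewrite zeroX_X /h; case: eqP => [_|/eqP ne]; rewrite ?rmorph0 // poly_inX (negbTE ne).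
apply/esym/(mmap_unique (g := fun q => (zeroX q)%:P)) => [a b|a b|c|i].
- by rewrite rmorphD polyCD.
- by rewrite rmorphM polyCM.
- by rewrite zeroXC.
- by rewrite zeroX_X /h; case: eqP.
Qed.

Lemma peval_poly_in v w p : (forall i, i != k -> w i = v i) ->
  peval w p = (map_poly (peval v) (poly_in p)).[w k].
Proof.
move=> wv; rewrite pevalE; apply/esym.
apply: (mmap_unique (g := fun p => (map_poly (pevalRM v) (poly_in p)).[w k])) => [a b|a b|c|i].
- by rewrite !rmorphD hornerD.
- by rewrite !rmorphM hornerM.
- by rewrite poly_inC map_polyC hornerC; exact: pevalC.
- rewrite poly_inX; case: eqP => [->|/eqP ne]; first by rewrite map_polyX hornerX.
  by rewrite map_polyC hornerC wv //; exact: pevalX.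
Qed.

End OneVariable.

(* The subfield generated by the [v i] with [i != k]. *)
Notation generated_off k := (generated_by (Xfree k)).

Definition rev_scaled (K : fieldType) (A : {poly K}) (R : K) : {poly K} :=
  \poly_(i < size A) (A`_((size A).-1 - i) * R ^+ ((size A).-1 - i)).

Lemma horner_rev_scaled (K : fieldType) (A : {poly K}) (R x : K) : x != 0 ->
  (rev_scaled A R).[x] = x ^+ (size A).-1 * A.[R / x].
Proof.
move=> x0; rewrite horner_poly horner_coef mulr_sumr.
rewrite (reindex_inj rev_ord_inj) /=; apply: eq_bigr => i _.
have hi : (i <= (size A).-1)%N by rewrite -ltnS (ltn_predK (ltn_ord i)) ltn_ord.
have -> : (size A - i.+1 = (size A).-1 - i)%N by rewrite -subn1 -subnDA add1n.
rewrite subKn // expfB_cond; last by rewrite (negbTE x0) add0n.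
by rewrite expr_div_n; field; rewrite expf_neq0.
Qed.

Lemma rev_scaled_eq0 (K : fieldType) (A : {poly K}) (R : K) : R != 0 ->
  rev_scaled A R = 0 -> A = 0.
Proof.
move=> R0 rA0; apply/polyP => i; rewrite coef0.
have [hi|] := ltnP i (size A); last exact: nth_default.
have /eqP := congr1 (fun B : {poly K} => B`_((size A).-1 - i)) rA0.
rewrite coef_poly coef0 subKn; last by rewrite -subn1; lia.
have -> : ((size A).-1 - i < size A)%N by rewrite -subn1; lia.
by rewrite mulf_eq0 expf_eq0 (negbTE R0) andbF orbF => /eqP.
Qed.

Section Exchange.
Variables (N : nat) (k : 'I_N).
Local Notation F := (ratfun N).
Local Notation MP := {mpoly rat[N]}.
Implicit Types (v w : 'I_N -> F) (p q : MP).

Lemma generated_off_eq v w f : (forall i, i != k -> w i = v i) ->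
  generated_off k v f -> generated_off k w f.
Proof.
move=> wv [p [q [Pp Pq nq ->]]].
by exists p, q; rewrite !(peval_Xfree wv).
Qed.

Lemma generated_off_var v i : i != k -> generated_off k v (v i).
Proof.
by move=> ik; rewrite -pevalX; exact: (generated_by_peval (Xfree_semiring_closed k) v (XfreeX ik)).
Qed.

Lemma clear_denominators v (A : {poly F}) : (forall j, generated_off k v A`_j) ->
  exists D (Am : {poly MP}), [/\ D \in Xfree k, peval v D != 0,
    forall j, Am`_j \in Xfree k & peval v D *: A = map_poly (peval v) Am].
Proof.
have [[X0 _] [X1 XM]] := Xfree_semiring_closed k.
elim/poly_ind: A => [_|A c IH gA].
  exists 1, 0; split=> [||j|]; first exact: X1.
  - by rewrite peval1 oner_eq0.
  - by rewrite coef0; exact: X0.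
  - by rewrite scaler0 map_poly0.
have [p [q [Pp Pq nq ec]]] : generated_off k v c.
  by have := gA 0%N; rewrite coefD coefMX coefC add0r.
have [D [Am [PD nD PAm eA]]] : exists D (Am : {poly MP}), [/\ D \in Xfree k,
    peval v D != 0, forall j, Am`_j \in Xfree k & peval v D *: A = map_poly (peval v) Am].
  by apply: IH => j; have := gA j.+1; rewrite coefD coefMX coefC addr0.
exists (D * q), (Am * q%:P * 'X + (D * p)%:P); split.
- exact: XM.
- by rewrite pevalM (mulf_neq0 nD nq).
- by case=> [|j]; rewrite coefD coefMX coefMC coefC /= ?add0r ?addr0 XM.
apply/polyP => j; rewrite coefZ coef_map_peval !coefD !coefMX coefMC !coefC.
case: j => [|j] /=; rewrite ?mul0r ?add0r ?addr0 ?mulr0.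
  by rewrite ec !pevalM mulrAC -mulrA (divfK nq).
have := congr1 (fun B : {poly F} => B`_j) eA; rewrite /= coefZ coef_map_peval => eAj.
by rewrite !pevalM -eAj mulrAC.
Qed.

Lemma generated_off_root_eq0 v (A : {poly F}) : alg_indep v ->
  (forall j, generated_off k v A`_j) -> A.[v k] = 0 -> A = 0.
Proof.
move=> hv gA rA; have [D [Am [PD nD PAm eA]]] := clear_denominators gA.
have Am_root : Am.['X_k] = 0.
  by apply: hv; rewrite -horner_map_peval pevalX -eA hornerZ rA mulr0.
have Am0 : Am = 0.
  have := congr1 (poly_in k) Am_root; rewrite -horner_map poly_inX eqxx rmorph0.
  have -> : map_poly (poly_in k) Am = map_poly polyC Am.
    by apply/polyP => j; rewrite !coef_map; exact: poly_in_Xfree (PAm j).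
  by rewrite polyC_hornerX.
by move/eqP: eA; rewrite Am0 map_poly0 scale_poly_eq0 (negbTE nD) => /eqP.
Qed.

Variables (v w : 'I_N -> F) (R : F).
Hypotheses (wv : forall i, i != k -> w i = v i) (gR : generated_off k v R)
  (vw : v k * w k = R).

Lemma alg_indep_exchange : alg_indep v -> R != 0 -> alg_indep w.
Proof.
move=> hv R0 p wp0; have XC := Xfree_semiring_closed k.
have vk0 := alg_indep_neq0 k hv.
pose A := map_poly (peval v) (poly_in k p).
have gA j : generated_off k v A`_j.
  by rewrite coef_map_peval; exact: (generated_by_peval XC v (coef_poly_in_Xfree k p j)).
have ArootR : A.[R / v k] = 0.
  by rewrite -vw [v k * _]mulrC (mulfK vk0) /A -(peval_poly_in _ wv).
(* [w k = R / v k] is a root of [A], so [v k] is a root of [rev_scaled A R],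
   whose coefficients still lie in the subfield generated by the [v i], [i != k]. *)
have gA' j : generated_off k v (rev_scaled A R)`_j.
  rewrite coef_poly; case: ifP => _; last exact: (generated_by0 XC v).
  exact: (generated_byM XC (gA _) (generated_byXn XC _ gR)).
have A0 : A = 0.
  apply: (rev_scaled_eq0 R0); apply: generated_off_root_eq0 hv gA' _.
  by rewrite (horner_rev_scaled _ _ vk0) ArootR mulr0.
rewrite -(horner_poly_in k p).
suff -> : poly_in k p = 0 by rewrite horner0.
apply/polyP => j; rewrite coef0; apply: hv.
by have := congr1 (fun B : {poly F} => B`_j) A0; rewrite /= coef_map_peval coef0.
Qed.

Lemma generates_exchange : generates v -> w k != 0 -> generates w.
Proof.
move=> gv wk0; apply/generatesP => f.
have TC := predT_semiring_closed N.
have gvk : generated_by predT w (v k).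
  have gwk : generated_by predT w (w k) by rewrite -pevalX; exact: (generated_by_peval TC).
  rewrite -[v k](mulfK wk0) vw.
  exact: (generated_byM TC (generated_by_sub (fun _ _ => isT) (generated_off_eq wv gR))
                           (generated_byV TC gwk)).
have gpeval p : generated_by predT w (peval v p).
  rewrite (peval_poly_in _ (fun i ne => esym (wv ne))).
  apply: (generated_by_horner TC _ gvk) => j; rewrite coef_map_peval.
  have := generated_by_peval TC w (p := (poly_in k p)`_j) isT.
  by rewrite (peval_Xfree wv (coef_poly_in_Xfree k p j)).
have [p [q [_ _ nq ->]]] := (iffLR (generatesP v) gv) f.
exact: (generated_byM TC (gpeval p) (generated_byV TC (gpeval q))).
Qed.

End Exchange.

(** * The tropical semifield and frozen monomials *)

Section Tropical.
Variable r : nat.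
Implicit Types (a b : trop r).

Lemma tmulE a b j : tmul a b j = a j + b j. Proof. by rewrite ffunE. Qed.
Lemma taddE a b j : tadd a b j = Order.min (a j) (b j). Proof. by rewrite ffunE. Qed.
Lemma toneE j : tone r j = 0. Proof. by rewrite ffunE. Qed.
Lemma tpowE a z j : tpow a z j = a j * z. Proof. by rewrite ffunE. Qed.

Lemma tbigE (I : Type) (s : seq I) (P : pred I) (G : I -> trop r) j :
  (\big[@tmul r/tone r]_(i <- s | P i) G i) j = \sum_(i <- s | P i) G i j.
Proof. by apply: (big_morph (fun a : trop r => a j)) => [a b|]; rewrite ?tmulE ?toneE. Qed.

Lemma tadd_tmull a b : tadd (tmul a b) b = tmul (tadd a (tone r)) b.
Proof.
apply/ffunP => j; rewrite !(tmulE, taddE, toneE) !minEle.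
by case: leP => h1; case: leP => h2; lia.
Qed.

End Tropical.

Section Monomials.
Variables M n : nat.
Local Notation mo := (@mono M n).
Implicit Types (a b : trop (M - n)).

Lemma Xn_neq0 i : Xn M i != 0.
Proof. by rewrite /Xn; case: insubP => [j _ _|_]; [exact: X_neq0 | exact: oner_neq0]. Qed.

Lemma XnE i (h : (i < M)%N) : Xn M i = X (Ordinal h).
Proof. by rewrite /Xn insubT. Qed.

Lemma mono_neq0 a : mo a != 0.
Proof. by rewrite prodf_seq_neq0; apply/allP => j _; rewrite expfz_neq0 ?Xn_neq0. Qed.

Lemma mono_tmul a b : mo (tmul a b) = mo a * mo b.
Proof.
rewrite /mono -big_split; apply: eq_bigr => j _.
by rewrite tmulE expfzDr ?Xn_neq0.
Qed.

Lemma mono_tpow a z : mo (tpow a z) = mo a ^ z.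
Proof.
rewrite /mono (big_morph (fun f => f ^ z) (fun f g => expfzMl f g z) (exp1rz _ z)).
by apply: eq_bigr => j _; rewrite tpowE exprz_exp.
Qed.

Lemma mono_tone : mo (tone _) = 1.
Proof. by rewrite /mono big1 // => j _; rewrite toneE expr0z. Qed.

Lemma mono_big (I : Type) (s : seq I) (P : pred I) (G : I -> trop (M - n)) :
  mo (\big[@tmul _/tone _]_(i <- s | P i) G i) = \prod_(i <- s | P i) mo (G i).
Proof. exact: (big_morph mo mono_tmul mono_tone). Qed.

Lemma mono_tadd (u w : ratfun M) a b :
  (u * mo (tmul a b) + w * mo b) / mo (tadd (tmul a b) b) =
  (mo a * u + w) / mo (tadd a (tone _)).
Proof.
rewrite tadd_tmull !mono_tmul.
have -> : u * (mo a * mo b) + w * mo b = (mo a * u + w) * mo b by ring.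
by rewrite invfM mulrACA (divff (mono_neq0 b)) mulr1.
Qed.

End Monomials.

(** * Subtraction-free expressions and their homomorphisms *)

Section SubtractionFree.
Variable m : nat.
Hypothesis m_gt0 : (0 < m)%N.
Local Notation F := (ratfun m).

Lemma sf1 : sf (1 : F).
Proof.
rewrite -(divff (X_neq0 (Ordinal m_gt0))).
by apply: sf_mul; [|apply: sf_inv]; exact: sf_var.
Qed.

Lemma sfXn (f : F) j : sf f -> sf (f ^+ j).
Proof. by move=> sff; elim: j => [|j IH]; rewrite ?expr0 ?exprS; [exact: sf1 | exact: sf_mul]. Qed.

Lemma sfXz (f : F) (z : int) : sf f -> sf (f ^ z).
Proof.
by case: z => j sff; rewrite ?NegzE -?invr_expz; [|apply: sf_inv]; exact: sfXn.
Qed.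

Lemma sf_prod (I : Type) (s : seq I) (P : pred I) (G : I -> F) :
  (forall i, P i -> sf (G i)) -> sf (\prod_(i <- s | P i) G i).
Proof. by move=> sfG; apply: big_ind => //; [exact: sf1 | exact: sf_mul]. Qed.

Lemma sf_Xn i : sf (Xn m i).
Proof. by rewrite /Xn; case: insubP => [j _ _|_]; [exact: sf_var | exact: sf1]. Qed.

Lemma sf_mono n e : sf (@mono m n e).
Proof. by apply: sf_prod => j _; apply: sfXz; exact: sf_Xn. Qed.

End SubtractionFree.

Section TropicalHom.
Variables (m r : nat) (phi : ratfun m -> trop r).
Hypotheses (m_gt0 : (0 < m)%N) (phi_hom : sf_hom_trop phi).
Local Notation F := (ratfun m).

Lemma phiM (f g : F) : sf f -> sf g -> phi (f * g) = tmul (phi f) (phi g).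
Proof. by move=> sff sfg; case: (phi_hom sff sfg). Qed.

Lemma phiD (f g : F) : sf f -> sf g -> phi (f + g) = tadd (phi f) (phi g).
Proof. by move=> sff sfg; case: (phi_hom sff sfg). Qed.

Lemma phi1 : phi 1 = tone r.
Proof.
have := phiM (sf1 m_gt0) (sf1 m_gt0); rewrite mulr1 => e.
by apply/ffunP => j; have := congr1 (fun a : trop r => a j) e; rewrite /= tmulE toneE; lia.
Qed.

Lemma phiV (f : F) : sf f -> f != 0 -> phi f^-1 = tpow (phi f) (-1).
Proof.
move=> sff f0; have := phiM sff (sf_inv sff); rewrite (divff f0) phi1 => e.
apply/ffunP => j; have := congr1 (fun a : trop r => a j) e.
by rewrite /= tmulE toneE tpowE; lia.
Qed.

Lemma phiXz (f : F) (z : int) : sf f -> f != 0 -> phi (f ^ z) = tpow (phi f) z.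
Proof.
move=> sff f0.
have phiXn j : phi (f ^+ j) = tpow (phi f) j.
  elim: j => [|j IH]; first by rewrite expr0 phi1; apply/ffunP => c; rewrite toneE tpowE mulr0.
  rewrite exprS phiM ?IH //; last exact: sfXn.
  by apply/ffunP => c; rewrite tmulE !tpowE intS mulrDr mulr1.
case: z => j; first exact: phiXn.
rewrite NegzE -invr_expz phiV ?phiXn ?expf_neq0 //; last exact: sfXn.
by apply/ffunP => c; rewrite !tpowE; ring.
Qed.

Lemma phi_prod (I : Type) (s : seq I) (P : pred I) (G : I -> F) :
  (forall i, P i -> sf (G i)) ->
  phi (\prod_(i <- s | P i) G i) = \big[@tmul r/tone r]_(i <- s | P i) phi (G i).
Proof.
move=> sfG; suff [] : sf (\prod_(i <- s | P i) G i) /\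
  phi (\prod_(i <- s | P i) G i) = \big[@tmul r/tone r]_(i <- s | P i) phi (G i) by [].
apply: (big_ind2 (fun f a => sf f /\ phi f = a)) => [|f1 a1 f2 a2 [s1 <-] [s2 <-]|i Pi].
- by split; [exact: sf1 | exact: phi1].
- by split; [exact: sf_mul | exact: phiM].
- by split; [exact: sfG |].
Qed.

Lemma phi_mono_tmul n (a b : trop (m - n)) :
  phi (@mono m n (tmul a b)) = tmul (phi (@mono m n a)) (phi (@mono m n b)).
Proof. by rewrite mono_tmul phiM //; exact: sf_mono. Qed.

Lemma phi_mono_tpow n (a : trop (m - n)) z :
  phi (@mono m n (tpow a z)) = tpow (phi (@mono m n a)) z.
Proof. by rewrite mono_tpow phiXz ?mono_neq0 //; exact: sf_mono. Qed.

End TropicalHom.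

Section SemifieldHom.
Variables (m mb : nat) (psi : ratfun m -> ratfun mb).
Hypotheses (m_gt0 : (0 < m)%N) (psi_hom : sf_hom psi)
  (psiX_neq0 : forall i, psi (X i) != 0).
Local Notation F := (ratfun m).

Lemma psiM (f g : F) : sf f -> sf g -> psi (f * g) = psi f * psi g.
Proof. by move=> sff sfg; case: (psi_hom.2 f g sff sfg). Qed.

Lemma psiD (f g : F) : sf f -> sf g -> psi (f + g) = psi f + psi g.
Proof. by move=> sff sfg; case: (psi_hom.2 f g sff sfg). Qed.

Lemma psi1 : psi 1 = 1.
Proof.
apply: (mulfI (psiX_neq0 (Ordinal m_gt0))).
by rewrite mulr1 -psiM ?mulr1 //; [exact: sf_var | exact: sf1].
Qed.

Lemma psi_neq0 (f : F) : sf f -> f != 0 -> psi f != 0.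
Proof.
move=> sff f0; apply/eqP => pf0; have := psiM sff (sf_inv sff).
by rewrite (divff f0) psi1 pf0 mul0r => /eqP; rewrite oner_eq0.
Qed.

Lemma psiV (f : F) : sf f -> f != 0 -> psi f^-1 = (psi f)^-1.
Proof.
move=> sff f0; have pf0 := psi_neq0 sff f0.
by apply: (mulfI pf0); rewrite -psiM ?(divff f0) ?(divff pf0) ?psi1 //; exact: sf_inv.
Qed.

Lemma psiXz (f : F) (z : int) : sf f -> f != 0 -> psi (f ^ z) = psi f ^ z.
Proof.
move=> sff f0.
have psiXn j : psi (f ^+ j) = psi f ^+ j.
  elim: j => [|j IH]; first by rewrite !expr0 psi1.
  by rewrite !exprS psiM ?IH //; exact: sfXn.
case: z => j; first exact: psiXn.
by rewrite NegzE -!invr_expz psiV ?psiXn ?expf_neq0 //; exact: sfXn.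
Qed.

Lemma psi_prod (I : Type) (s : seq I) (P : pred I) (G : I -> F) :
  (forall i, P i -> sf (G i)) ->
  psi (\prod_(i <- s | P i) G i) = \prod_(i <- s | P i) psi (G i).
Proof.
move=> sfG; suff [] : sf (\prod_(i <- s | P i) G i) /\
  psi (\prod_(i <- s | P i) G i) = \prod_(i <- s | P i) psi (G i) by [].
apply: (big_ind2 (fun f a => sf f /\ psi f = a)) => [|f1 a1 f2 a2 [s1 <-] [s2 <-]|i Pi].
- by split; [exact: sf1 | exact: psi1].
- by split; [exact: sf_mul | exact: psiM].
- by split; [exact: sfG |].
Qed.

End SemifieldHom.

(** * The specialization map *)

Section Specialization.
Variables (n m mb : nat) (phi : ratfun m -> trop (mb - n)) (psi : ratfun m -> ratfun mb).
Hypotheses (m_gt0 : (0 < m)%N) (phi_hom : sf_hom_trop phi) (psi_hom : sf_hom psi)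
  (psiX_neq0 : forall i, psi (X i) != 0)
  (psiX_frozen : forall i : 'I_m, (n <= i)%N -> psi (X i) = @mono mb n (phi (X i))).
Local Notation F := (ratfun m).
Local Notation mo := (@mono mb n).

Lemma psi_mono (e : trop (m - n)) : psi (@mono m n e) = mo (phi (@mono m n e)).
Proof.
have sfX (j : 'I_(m - n)) : sf (Xn m (n + j) ^ e j) by apply: (sfXz m_gt0); exact: (sf_Xn m_gt0).
have -> : @mono m n e = \prod_(j < m - n) Xn m (n + j) ^ e j by [].
rewrite (psi_prod m_gt0) ?(phi_prod m_gt0) // mono_big; apply: eq_bigr => j _.
have nj_lt : (n + j < m)%N by have := ltn_ord j; lia.
rewrite (XnE nj_lt) (psiXz m_gt0) ?(phiXz m_gt0) ?mono_tpow ?X_neq0 //; try exact: sf_var.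
by rewrite psiX_frozen //= leq_addr.
Qed.

Definition bar (f : F) := psi f / mo (phi f).

Lemma psi_bar f : psi f = bar f * mo (phi f).
Proof. by rewrite /bar (divfK (mono_neq0 _)). Qed.

Lemma bar_mono e : bar (@mono m n e) = 1.
Proof. by rewrite /bar psi_mono (divff (mono_neq0 _)). Qed.

Lemma bar_mul f g : sf f -> sf g -> bar (f * g) = bar f * bar g.
Proof. by move=> sff sfg; rewrite /bar psiM ?phiM ?mono_tmul ?mulf_div. Qed.

Lemma bar_expz f (z : int) : sf f -> f != 0 -> bar (f ^ z) = bar f ^ z.
Proof.
move=> sff f0; rewrite /bar (psiXz m_gt0) ?(phiXz m_gt0) ?mono_tpow //.
by rewrite expfzMl exprz_inv invr_expz.
Qed.

Lemma bar_inv f : sf f -> f != 0 -> bar f^-1 = (bar f)^-1.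
Proof. by move=> sff f0; rewrite -!exprN1 -bar_expz. Qed.

Lemma bar_prod (I : Type) (s : seq I) (P : pred I) (G : I -> F) :
  (forall i, P i -> sf (G i)) -> bar (\prod_(i <- s | P i) G i) = \prod_(i <- s | P i) bar (G i).
Proof.
move=> sfG; rewrite /bar (psi_prod m_gt0) ?(phi_prod m_gt0) // mono_big.
by rewrite -prodf_div.
Qed.

Lemma bar_exchange (e : trop (m - n)) (P Q : F) : sf P -> sf Q -> Q != 0 ->
  bar ((@mono m n e * P + Q) / @mono m n (tadd e (tone _))) =
  (mo (phi (@mono m n e * P / Q)) * bar P + bar Q) / mo (tadd (phi (@mono m n e * P / Q)) (tone _)).
Proof.
move=> sfP sfQ Q0; set c := phi (_ / Q); have sfM := sf_mono m_gt0.
have sfMP : sf (@mono m n e * P) := sf_mul (sfM n e) sfP.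
rewrite bar_mul; [|exact: (sf_add sfMP sfQ)|exact: (sf_inv (sfM n _))].
rewrite (bar_inv (sfM n _) (mono_neq0 _)) bar_mono invr1 mulr1.
rewrite {1}/bar (psiD psi_hom sfMP sfQ) (phiD phi_hom sfMP sfQ) (psi_bar (_ * P)) (psi_bar Q).
have -> : phi (@mono m n e * P) = tmul c (phi Q).
  rewrite /c (phiM phi_hom sfMP (sf_inv sfQ)) (phiV m_gt0 phi_hom sfQ Q0).
  by apply/ffunP => j; rewrite !(tmulE, tpowE); ring.
by rewrite mono_tadd (bar_mul (sfM n e) sfP) bar_mono mul1r.
Qed.

End Specialization.

(** * Seed patterns *)

Lemma vert_ind n (P : vert n -> Prop) : P (troot n) ->
  (forall t k t', edge t k t' -> P t -> P t') -> forall t, P t.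
Proof.
move=> P0 PS [s rs]; elim/last_ind: s rs => [|s a IH] rs.
  by have -> : exist _ [::] rs = troot n by apply: val_inj.
have rs' : reduced s by case: s rs {IH} => // x s; rewrite /reduced /= rcons_path => /andP [].
by apply: (PS (exist _ s rs') a); [left | exact: IH].
Qed.

Lemma skew_symmetrizable_diag n (B : 'M[int]_n) i :
  skew_symmetrizable B -> B i i = 0.
Proof. by case=> d [d_gt0 dB]; have := dB i i; have := d_gt0 i; nia. Qed.

Section ExtendedCluster.
Variables (M n : nat) (x : 'I_n -> ratfun M).

Lemma ext_cluster_widen (le_nM : (n <= M)%N) i : ext_cluster x (widen_ord le_nM i) = x i.
Proof.
rewrite /ext_cluster /=; case: insubP => [j _ ej|]; last by rewrite ltn_ord.
by congr x; apply: val_inj.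
Qed.

Lemma ext_cluster_frozen (i : 'I_M) : (n <= i)%N -> ext_cluster x i = X i.
Proof.
move=> ni; rewrite /ext_cluster; case: insubP => [j ltin _|//].
by move: ltin; rewrite ltnNge ni.
Qed.

Lemma ext_clusterP (le_nM : (n <= M)%N) (i : 'I_M) :
  (exists i0 : 'I_n, i = widen_ord le_nM i0) \/ (n <= i)%N.
Proof.
have [lt_in|] := ltnP i n; last by right.
by left; exists (Ordinal lt_in); apply: val_inj.
Qed.

End ExtendedCluster.

Lemma prodfz_sign (K : fieldType) (I : finType) (G : I -> K) (b : I -> int) :
  \prod_i G i ^ b i = (\prod_(i | 0 < b i) G i ^ b i) / \prod_(i | b i < 0) G i ^ (- b i).
Proof.
rewrite (bigID (fun i => 0 < b i)) /=; congr (_ * _).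
rewrite (bigID (fun i => b i < 0)) /= [X in _ * X]big1 ?mulr1; last first.
  move=> i /andP [h1 h2]; have -> : b i = 0 by move: h1 h2; rewrite -!leNgt; lia.
  exact: expr0z.
rewrite -prodfV; apply: eq_big => [i|i /andP [_ bi_lt0]].
  by case: (ltrgt0P (b i)).
by rewrite invr_expz opprK.
Qed.

Lemma sum_sign (I : finType) (a b : I -> int) :
  \sum_i a i * b i = \sum_(i | 0 < b i) a i * b i - \sum_(i | b i < 0) a i * (- b i).
Proof.
rewrite (bigID (fun i => 0 < b i)) /=; congr (_ + _).
rewrite (bigID (fun i => b i < 0)) /= [X in _ + X]big1 ?addr0; last first.
  move=> i /andP [h1 h2]; have -> : b i = 0 by move: h1 h2; rewrite -!leNgt; lia.
  exact: mulr0.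
rewrite -sumrN; apply: eq_big => [i|i _]; last by rewrite mulrN opprK.
by case: (ltrgt0P (b i)).
Qed.

Lemma sum_sgz_max (I : finType) (a b : I -> int) (c : int) :
  \sum_i a i * (sgz (b i) * Order.max (b i * c) 0) =
  Order.max c 0 * \sum_(i | 0 < b i) a i * b i
  - Order.max (- c) 0 * \sum_(i | b i < 0) a i * (- b i).
Proof.
rewrite !mulr_sumr (bigID (fun i => 0 < b i)) /=; congr (_ + _).
  apply: eq_bigr => i bi_gt0; rewrite gtr0_sgz // mul1r !maxEle.
  by case: leP => h1; case: leP => h2; nia.
rewrite (bigID (fun i => b i < 0)) /= [X in _ + X]big1 ?addr0; last first.
  move=> i /andP [h1 h2]; have -> : b i = 0 by move: h1 h2; rewrite -!leNgt; lia.
  by rewrite sgz0 mul0r mulr0.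
rewrite -sumrN; apply: eq_big => [i|i /andP [_ bi_lt0]]; first by case: (ltrgt0P (b i)).
by rewrite ltr0_sgz // !maxEle; case: leP => h1; case: leP => h2; nia.
Qed.

(* One coordinate of the y-mutation rule: [a] and [a'] are the coordinates of
   [phi] on the clusters before and after mutation in direction [k], and [Yk],
   [Mo] those of [phi] on the coefficient monomials [y_k] and [y_k (+) 1]. *)
Section TropicalYMutation.
Variables (n : nat) (b : 'M[int]_n) (k : 'I_n) (a a' : 'I_n -> int) (Yk Mo : int).
Hypotheses (bkk : b k k = 0) (a'E : forall i, i != k -> a' i = a i).
Let sp := \sum_(i | 0 < b i k) a i * b i k.
Let sm := \sum_(i | b i k < 0) a i * - b i k.
Hypothesis exchange : a k + a' k = Order.min (Yk + sp) sm - Mo.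

Lemma tropical_y_mutation_k :
  - Yk + \sum_i a' i * mat_mut k b i k = - (Yk + \sum_i a i * b i k).
Proof.
rewrite opprD -sumrN; congr (_ + _); apply: eq_bigr => i _.
rewrite mxE eqxx orbT mulrN; case: (eqVneq i k) => [->|ik]; first by rewrite bkk !mulr0.
by rewrite a'E.
Qed.

Lemma tropical_y_mutation j (Yj : int) : j != k ->
  Yj + (Yk * Order.max (b k j) 0 + Mo * - b k j) + \sum_i a' i * mat_mut k b i j =
  Yj + \sum_i a i * b i j + ((Yk + \sum_i a i * b i k) * Order.max (b k j) 0
    + Order.min (Yk + \sum_i a i * b i k) 0 * - b k j).
Proof.
move=> jk.
have mutE i : mat_mut k b i j =
    if i == k then - b k j else b i j + sgz (b i k) * Order.max (b i k * b k j) 0.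
  by rewrite mxE (negbTE jk) orbF; case: eqP => [->|].
rewrite (bigD1 k) //= mutE eqxx.
have -> : \sum_(i | i != k) a' i * mat_mut k b i j = \sum_(i | i != k) a i * b i j
    + \sum_i a i * (sgz (b i k) * Order.max (b i k * b k j) 0).
  rewrite [X in _ = _ + X](bigD1 k) //= bkk sgz0 mul0r mulr0 add0r -big_split /=.
  by apply: eq_bigr => i ik; rewrite mutE (negbTE ik) a'E // mulrDr.
rewrite sum_sgz_max [\sum_i a i * b i j](bigD1 k) //= sum_sign -/sp -/sm.
have -> : a' k = Order.min (Yk + sp) sm - Mo - a k by rewrite -exchange; ring.
have -> : Order.min (Yk + (sp - sm)) 0 = Order.min (Yk + sp) sm - sm.
  by rewrite !minEle; case: leP => h1; case: leP => h2; lia.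
have -> : Order.max (- b k j) 0 = Order.max (b k j) 0 - b k j.
  by rewrite !maxEle; case: leP => h1; case: leP => h2; lia.
ring.
Qed.

End TropicalYMutation.

Section SeedPattern.
Variables (n m mb : nat) (phi : ratfun m -> trop (mb - n)) (psi : ratfun m -> ratfun mb).
Hypotheses (m_gt0 : (0 < m)%N) (le_nm : (n <= m)%N) (le_nmb : (n <= mb)%N)
  (phi_hom : sf_hom_trop phi) (psi_hom : sf_hom psi).
Hypothesis psiX : forall i : 'I_m,
  psi (X i) = (if (val i < n)%N then Xn mb (val i) * @mono mb n (phi (X i))
               else @mono mb n (phi (X i))).
Variables (x : vert n -> 'I_n -> ratfun m) (y : vert n -> 'I_n -> trop (m - n))
  (B : vert n -> 'M[int]_n).
Hypotheses (seed : seed_pattern x y B) (x_root : forall i, x (troot n) i = X (widen_ord le_nm i)).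
Local Notation mo := (@mono mb n).
Local Notation bar := (bar phi psi).

Let psiX_neq0 i : psi (X i) != 0.
Proof.
rewrite psiX; case: ifP => _; last exact: mono_neq0.
by apply: mulf_neq0; [exact: Xn_neq0 | exact: mono_neq0].
Qed.

Let psiX_frozen (i : 'I_m) : (n <= i)%N -> psi (X i) = mo (phi (X i)).
Proof. by rewrite psiX ltnNge => ->. Qed.

Let Pp t k := \prod_(i < n | 0 < B t i k) x t i ^ B t i k.
Let Pm t k := \prod_(i < n | B t i k < 0) x t i ^ (- B t i k).

Lemma seed_exchange t k t' : edge t k t' ->
  x t k * x t' k = (@mono m n (y t k) * Pp t k + Pm t k) / @mono m n (tadd (y t k) (tone _)).
Proof. by case/(seed.2.2 t t' k). Qed.

Lemma seed_x_neq0 t i : x t i != 0.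
Proof. by have := alg_indep_neq0 (widen_ord le_nm i) (seed.1 t).1; rewrite ext_cluster_widen. Qed.

Lemma seed_sf t i : sf (x t i).
Proof.
elim/vert_ind: t i => [i|t k t' e IH i]; first by rewrite x_root; exact: sf_var.
have [_ _ x_stable _] := seed.2.2 t t' k e.
have [->|ik] := eqVneq i k; last by rewrite x_stable.
have sf_xz i' z : sf (x t i' ^ z) := sfXz m_gt0 z (IH i').
rewrite -[x t' k](mulKf (seed_x_neq0 t k)) (seed_exchange e).
apply: sf_mul; first exact: (sf_inv (IH k)).
apply: sf_mul; last exact: (sf_inv (sf_mono m_gt0 _)).
apply: sf_add; last by apply: (sf_prod m_gt0) => i' _; exact: sf_xz.
by apply: sf_mul; [exact: sf_mono | apply: (sf_prod m_gt0) => i' _; exact: sf_xz].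
Qed.

Let sf_xz t i z : sf (x t i ^ z). Proof. exact: (sfXz m_gt0 z (seed_sf t i)). Qed.
Let sf_Pp t k : sf (Pp t k). Proof. exact: (sf_prod m_gt0 _ (fun i _ => sf_xz t i _)). Qed.
Let sf_Pm t k : sf (Pm t k). Proof. exact: (sf_prod m_gt0 _ (fun i _ => sf_xz t i _)). Qed.
Let Pm_neq0 t k : Pm t k != 0.
Proof. by apply/prodf_neq0 => i _; rewrite expfz_neq0 // seed_x_neq0. Qed.

Lemma yhat_sign t k : yhat (x t) (y t) (B t) k = @mono m n (y t k) * Pp t k / Pm t k.
Proof. by rewrite /yhat prodfz_sign mulrA. Qed.

Lemma bar_neq0 t i : bar (x t i) != 0.
Proof.
apply: mulf_neq0; last by rewrite invr_eq0 mono_neq0.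
exact: (psi_neq0 m_gt0 psi_hom psiX_neq0 (seed_sf t i) (seed_x_neq0 t i)).
Qed.

Lemma bar_seed_exchange t k t' : edge t k t' ->
  bar (x t k) * bar (x t' k) =
  (mo (phi (yhat (x t) (y t) (B t) k)) * \prod_(i < n | 0 < B t i k) bar (x t i) ^ B t i k
   + \prod_(i < n | B t i k < 0) bar (x t i) ^ (- B t i k))
  / mo (tadd (phi (yhat (x t) (y t) (B t) k)) (tone _)).
Proof.
move=> e; rewrite yhat_sign -(bar_mul phi_hom psi_hom (seed_sf t k) (seed_sf t' k)).
rewrite (seed_exchange e).
rewrite (bar_exchange m_gt0 phi_hom psi_hom psiX_neq0 psiX_frozen _
  (sf_Pp t k) (sf_Pm t k) (Pm_neq0 t k)).
have bar_xz i z : bar (x t i ^ z) = bar (x t i) ^ z.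
  exact: (bar_expz m_gt0 phi_hom psi_hom psiX_neq0 z (seed_sf t i) (seed_x_neq0 t i)).
rewrite /Pp /Pm !(bar_prod m_gt0 phi_hom psi_hom psiX_neq0 _ (fun i _ => sf_xz t i _)).
by congr ((_ * _ + _) / _); apply: eq_bigr => i _; rewrite bar_xz.
Qed.

Lemma phi_yhat t j c : phi (yhat (x t) (y t) (B t) j) c =
  phi (@mono m n (y t j)) c + \sum_i phi (x t i) c * B t i j.
Proof.
rewrite /yhat (phiM phi_hom (sf_mono m_gt0 _) (sf_prod m_gt0 _ (fun i _ => sf_xz t i _))).
rewrite (phi_prod m_gt0 phi_hom _ (fun i _ => sf_xz t i _)) tmulE tbigE.
congr (_ + _); apply: eq_bigr => i _.
by rewrite (phiXz m_gt0 phi_hom _ (seed_sf t i) (seed_x_neq0 t i)) tpowE.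
Qed.

Lemma phi_seed_exchange t k t' c : edge t k t' ->
  phi (x t k) c + phi (x t' k) c =
  Order.min (phi (@mono m n (y t k)) c + \sum_(i | 0 < B t i k) phi (x t i) c * B t i k)
            (\sum_(i | B t i k < 0) phi (x t i) c * - B t i k)
  - phi (@mono m n (tadd (y t k) (tone _))) c.
Proof.
move=> e; have sfM := sf_mono m_gt0.
have sfMP : sf (@mono m n (y t k) * Pp t k) := sf_mul (sfM n _) (sf_Pp t k).
rewrite -tmulE -(phiM phi_hom (seed_sf t k) (seed_sf t' k)) (seed_exchange e).
rewrite (phiM phi_hom (sf_add sfMP (sf_Pm t k)) (sf_inv (sfM n _))).
rewrite (phiV m_gt0 phi_hom (sfM n _) (mono_neq0 _)) (phiD phi_hom sfMP (sf_Pm t k)).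
rewrite (phiM phi_hom (sfM n _) (sf_Pp t k)).
rewrite /Pp /Pm !(phi_prod m_gt0 phi_hom _ (fun i _ => sf_xz t i _)).
rewrite !(tmulE, taddE, tpowE, tbigE) mulrN1.
by congr (Order.min (_ + _) _ - _); apply: eq_bigr => i _;
  rewrite (phiXz m_gt0 phi_hom _ (seed_sf t i) (seed_x_neq0 t i)) tpowE.
Qed.

Lemma phi_yhat_mutation t k t' : edge t k t' ->
  (fun j => phi (yhat (x t') (y t') (B t') j)) =
  y_mut k (B t) (fun j => phi (yhat (x t) (y t) (B t) j)).
Proof.
move=> e; have [B_mut y_mutE x_stable _] := seed.2.2 t t' k e.
apply: functional_extensionality => j; apply/ffunP => c.
have a'E i : i != k -> phi (x t' i) c = phi (x t i) c by move=> ik; rewrite x_stable.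
have bkk := skew_symmetrizable_diag k (seed.2.1 t).
have ex := phi_seed_exchange c e.
rewrite /y_mut phi_yhat B_mut y_mutE /y_mut; case: eqP => [->|/eqP jk].
  rewrite (phi_mono_tpow m_gt0 phi_hom) !tpowE phi_yhat mulrN1 mulrN1.
  exact: (tropical_y_mutation_k _ bkk a'E).
rewrite !(phi_mono_tmul m_gt0 phi_hom) !(phi_mono_tpow m_gt0 phi_hom).
rewrite !(tmulE, tpowE, taddE, toneE) !phi_yhat.
exact: (tropical_y_mutation bkk a'E ex _ jk).
Qed.

Lemma ext_bar_root : ext_cluster (fun i => bar (x (troot n) i)) =1 @X mb.
Proof.
move=> i; have [[i0 ->]|ni] := ext_clusterP le_nmb i; last by rewrite ext_cluster_frozen.
rewrite ext_cluster_widen x_root /bar psiX /= ltn_ord (mulfK (mono_neq0 _)).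
by rewrite (XnE (leq_trans (ltn_ord i0) le_nmb)); congr X; apply: val_inj.
Qed.

Section Mutation.
Variables (t : vert n) (k : 'I_n) (t' : vert n).
Hypothesis e : edge t k t'.
Let v := ext_cluster (fun i => bar (x t i)).
Let w := ext_cluster (fun i => bar (x t' i)).
Let K := widen_ord le_nmb k.

Lemma ext_bar_stable i : i != K -> w i = v i.
Proof.
have [_ _ x_stable _] := seed.2.2 t t' k e.
have [[i0 ->]|ni] := ext_clusterP le_nmb i; last by rewrite /v /w !ext_cluster_frozen.
by move=> i0K; rewrite /v /w !ext_cluster_widen x_stable.
Qed.

Lemma ext_bar_exchange : v K * w K = bar (x t k) * bar (x t' k).
Proof. by rewrite /v /w /K !ext_cluster_widen. Qed.

Lemma bar_exchange_generated_off : generated_off K v (bar (x t k) * bar (x t' k)).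
Proof.
have XC := Xfree_semiring_closed K.
have gmono a : generated_off K v (mo a).
  apply: (generated_by_prod XC) => j _; apply: (generated_byXz XC).
  have lt_nj : (n + j < mb)%N by have := ltn_ord j; lia.
  rewrite (XnE lt_nj) -(ext_cluster_frozen (fun i => bar (x t i))) /=; last exact: leq_addr.
  apply: generated_off_var; apply: contraTneq (leq_addr j n) => /(congr1 val) /= ->.
  by rewrite -ltnNge; exact: (ltn_ord k).
have gx i z : B t i k != 0 -> generated_off K v (bar (x t i) ^ z).
  move=> bik; apply: (generated_byXz XC).
  rewrite -(ext_cluster_widen (fun i => bar (x t i)) le_nmb i).
  apply: generated_off_var; apply: contra_neq bik => /(congr1 val) /= ik.
  by rewrite (val_inj ik); exact: skew_symmetrizable_diag (seed.2.1 t).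
rewrite (bar_seed_exchange e); apply: (generated_byM XC); last exact: (generated_byV XC (gmono _)).
apply: (generated_byD XC); first apply: (generated_byM XC (gmono _)).
  by apply: (generated_by_prod XC) => i bik; apply: gx; rewrite gt_eqF.
by apply: (generated_by_prod XC) => i bik; apply: gx; rewrite lt_eqF.
Qed.

End Mutation.

Lemma bar_cluster_free t :
  alg_indep (ext_cluster (fun i => bar (x t i))) /\ generates (ext_cluster (fun i => bar (x t i))).
Proof.
elim/vert_ind: t => [|t k t' e [iv gv]].
  apply: (alg_indep_generates_eq (v := @X mb)) (conj (@alg_indep_X mb) (@generates_X mb)) => i.
  by rewrite ext_bar_root.
have wv := ext_bar_stable e; have vw := ext_bar_exchange t k t'.
have gR := bar_exchange_generated_off e.
have R0 := mulf_neq0 (bar_neq0 t k) (bar_neq0 t' k).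
have wK0 : ext_cluster (fun i => bar (x t' i)) (widen_ord le_nmb k) != 0.
  by rewrite ext_cluster_widen; exact: bar_neq0.
split; first exact: (alg_indep_exchange wv gR vw iv R0).
exact: (generates_exchange wv gR vw gv wK0).
Qed.

End SeedPattern.

Theorem theorem4p3p4 (n m mb : nat) (hn : (0 < n)%N) (hm : (0 < m)%N)
  (hmb : (0 < mb)%N) (hnm : (n <= m)%N) (hnmb : (n <= mb)%N)
  (phi : ratfun m -> trop (mb - n)) (psi : ratfun m -> ratfun mb)
  (hphi : sf_hom_trop phi) (hpsi : sf_hom psi)
  (hpsi_x : forall i : 'I_m,
     psi (X i) = (if (val i < n)%N then Xn mb (val i) * @mono mb n (phi (X i))
                  else @mono mb n (phi (X i))))
  (x : vert n -> 'I_n -> ratfun m) (y : vert n -> 'I_n -> trop (m - n))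
  (B : vert n -> 'M[int]_n)
  (hseed : seed_pattern x y B)
  (hinit : forall i : 'I_n, x (troot n) i = X (widen_ord hnm i)) :
  seed_pattern
    (fun t i => psi (x t i) / @mono mb n (phi (x t i)))
    (fun t k => phi (yhat (x t) (y t) (B t) k))
    B.
Proof.
split; [|split].
- by move=> t; eapply bar_cluster_free; eassumption.
- exact: hseed.2.1.
move=> t t' k e; have [B_mut _ x_stable _] := hseed.2.2 t t' k e; split.
- exact: B_mut.
- by eapply phi_yhat_mutation; eassumption.
- by move=> i ik; rewrite x_stable.
- by eapply bar_seed_exchange; eassumption.
Qed.
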